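(* Let $k>0$ be an integer (in canonical form) and let $G\cong\{a\mid b\}$ where $a$, $b$, $G$ are numbers. If $b-G\le 1$ and, for $i=1,\dots,k$, $\alpha_i>0$ is the least integer such that $2^{-\alpha_i}<b-G-\sum_{j=1}^{i-1}2^{-\alpha_j}$, then \[G\mathbin{:}k=G+\sum_{i=1}^k\frac{1}{2^{\alpha_i}}.\] Similarly, if $G-a\le 1$ and, for $i=1,\dots,k$, $\beta_i$ is the least integer such that $2^{-\beta_i}<G-a-\sum_{j=1}^{i-1}2^{-\beta_j}$, then \[G\mathbin{:}(-k)=G-\sum_{i=1}^k\frac{1}{2^{\beta_i}}.\]
   Context: Games are short normal-play combinatorial games, written $\{L\mid R\}$; a number is a game with $G^L<G<G^R$ for all options, with values identified with dyadic rationals. Canonical integers: $n\cong\{n-1\mid\}$ for $n>0$, $n\cong\{\mid n+1\}$ for $n<0$, $0\cong\{\mid\}$. The ordinal sum is $G\mathbin{:}H\cong\{L(G),\,G\mathbin{:}L(H)\mid R(G),\,G\mathbin{:}R(H)\}$. *)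

From mathcomp Require Import all_boot.
Set Implicit Arguments. Unset Strict Implicit. Unset Printing Implicit Defensive.

Inductive game : Type := Game : seq game -> seq game -> game.

Definition leftopts (g : game) := let: Game l _ := g in l.
Definition rightopts (g : game) := let: Game _ r := g in r.

Fixpoint gsize (g : game) : nat :=
  let: Game l r := g in (sumn (map gsize l) + sumn (map gsize r)).+1.

(* Defined by recursion on a fuel bounding gsize G + gsize H; the
   fuel gsize G + gsize H given in [gle] below is always sufficient (every
   recursive call strictly decreases the size sum, which stays >= 2), so the
   dummy base case is never reached. *)
Fixpoint le_fuel (n : nat) (g h : game) : bool :=
  match n with
  | 0 => true
  | n'.+1 =>
    ~~ has (fun hr => le_fuel n' hr g) (rightopts h) &&
    ~~ has (fun gl => le_fuel n' h gl) (leftopts g)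
  end.

Definition gle (g h : game) : bool := le_fuel (gsize g + gsize h) g h.
Definition glt (g h : game) : bool := gle g h && ~~ gle h g.
Definition game_eq (g h : game) : bool := gle g h && gle h g.

Fixpoint neg (g : game) : game :=
  let: Game l r := g in Game (map neg r) (map neg l).

Fixpoint add (g h : game) : game :=
  let: Game gl gr := g in
  let fix addg (h : game) : game :=
    let: Game hl hr := h in
    Game (map (fun x => add x h) gl ++ map addg hl)
         (map (fun x => add x h) gr ++ map addg hr)
  in addg h.

Definition zero : game := Game [::] [::].

Definition gsum (s : seq game) : game := foldr add zero s.

Fixpoint osum (g h : game) : game :=
  let: Game hl hr := h in
  Game (leftopts g ++ map (osum g) hl) (rightopts g ++ map (osum g) hr).

Fixpoint posint (n : nat) : game :=
  if n is m.+1 then Game [:: posint m] [::] else zero.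
Fixpoint negint (n : nat) : game :=
  if n is m.+1 then Game [::] [:: negint m] else zero.

Fixpoint pinv2 (n : nat) : game :=
  if n is m.+1 then Game [:: zero] [:: pinv2 m] else Game [:: zero] [::].

Fixpoint is_number (g : game) : bool :=
  let: Game l r := g in
  all is_number l && all is_number r &&
  all (fun x => glt x g) l && all (fun y => glt g y) r.

Definition partial_pinv (e : nat -> nat) (i : nat) : game :=
  gsum [seq pinv2 (e j) | j <- iota 1 i.-1].

(* Every number has a dyadic value, the simplest dyadic strictly between the
   values of its options, and the order, sum and negation of numbers are
   computed on values.  Since G:(k+1) = {a, G:k | b}, the value y' of G:(k+1)
   is the simplest dyadic in (y, b), where y is the value of G:k.  If y is a
   multiple of 2^-n with b - y <= 2^-n (for G itself this follows from
   b - G <= 1), then the least alpha with 2^-alpha < b - y exceeds n, so y is a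
   multiple of 2^-(alpha-1) and b - y <= 2^-(alpha-1); hence y' = y + 2^-alpha,
   and b - y' <= 2^-alpha restores the invariant.  G:(-k) is the negative of
   (-G):k. *)

From mathcomp Require Import all_boot all_order ssralg ssrnum ssrint rat archimedean.
From mathcomp Require Import lra zify.
Set Implicit Arguments. Unset Strict Implicit. Unset Printing Implicit Defensive.
Import Order.TTheory GRing.Theory Num.Theory.

Lemma exists_max_seq d (T : orderType d) (s : seq T) x0 : x0 \in s ->
  exists2 x, x \in s & all (fun y => y <= x)%O s.
Proof.
elim: s x0 => // a s IH x0 _; case: s IH => [|b s] IH.
  by exists a; rewrite ?mem_head //= lexx.
have [x xs xmax] := IH b (mem_head b s).
case: (leP a x) => ax.
  by exists x; [rewrite inE xs orbT | rewrite /= ax].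
exists a; first exact: mem_head.
rewrite /= lexx; apply: sub_all xmax => y /= yx; exact: le_trans yx (ltW ax).
Qed.

Local Open Scope ring_scope.

(** * Dyadic rationals and simplicity *)

Section DyadicSimplicity.
Variable R : archiRealFieldType.
Implicit Types (l x y : R) (L U : seq R).

Lemma pow2V_gt0 n : 0 < 2 ^- n :> R.
Proof. by rewrite invr_gt0 exprn_gt0. Qed.

Lemma pow2VS n : 2 ^- n.+1 = 2 ^- n / 2 :> R.
Proof. by rewrite exprS invfM mulrC. Qed.

Lemma ler_pow2V m n : (m <= n)%N -> 2 ^- n <= 2 ^- m :> R.
Proof. by move=> mn; rewrite lef_pV2 ?posrE ?exprn_gt0 // ler_eXn2l ?ltr1n. Qed.

Lemma ltr_pow2V m n : (2 ^- n < 2 ^- m :> R) = (m < n)%N.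
Proof. by rewrite ltf_pV2 ?posrE ?exprn_gt0 // ltr_eXn2l ?ltr1n. Qed.

Definition dyadic n x := x * 2 ^+ n \is a Num.int.

Definition exact_dyadic n x := dyadic n x && ((n == 0)%N || ~~ dyadic n.-1 x).

Lemma dyadicW m n x : (m <= n)%N -> dyadic m x -> dyadic n x.
Proof.
move/subnK <-; rewrite /dyadic addnC exprD mulrA => dx.
by apply: rpredM dx _; apply: rpredX; exact: natr_int 2.
Qed.

Lemma dyadicD n x y : dyadic n x -> dyadic n y -> dyadic n (x + y).
Proof. by rewrite /dyadic mulrDl; apply: rpredD. Qed.

Lemma dyadicN n x : dyadic n (- x) = dyadic n x.
Proof. by rewrite /dyadic mulNr rpredN. Qed.

Lemma dyadic0 n : dyadic n 0.
Proof. by rewrite /dyadic mul0r int_num0. Qed.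

Lemma dyadic_pow2V n : dyadic n (2 ^- n).
Proof. by rewrite /dyadic mulVf ?int_num1 // expf_neq0 // pnatr_eq0. Qed.

Lemma dyadic_pow2VS n : ~~ dyadic n (2 ^- n.+1).
Proof.
rewrite /dyadic exprS invfM -mulrA mulVf ?mulr1; last by rewrite expf_neq0 // pnatr_eq0.
apply/negP => /intrP [z hz].
have z_gt0 : (0 : R) < z%:~R by rewrite -hz invr_gt0.
have z_lt1 : z%:~R < 1 :> R by rewrite -hz invf_lt1 ?ltr1n.
by move: z_gt0 z_lt1; rewrite ltr0z ltrz1; lia.
Qed.

Lemma dyadic_gap n x y : dyadic n x -> dyadic n y -> x < y -> x + 2 ^- n <= y.
Proof.
move=> /intrP [a ha] /intrP [b hb] xy.
have p_gt0 : 0 < 2 ^+ n :> R by rewrite exprn_gt0.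
suff ab : (a + 1)%:~R <= b%:~R :> R.
  by rewrite -(ler_pM2r p_gt0) mulrDl mulVf ?gt_eqF // ha hb -[1]/(1%:~R) -intrD.
by rewrite ler_int lezD1 -(ltr_int R) -ha -hb ltr_pM2r.
Qed.

Lemma exact_dyadic_exists n x :
  dyadic n x -> exists2 m, (m <= n)%N & exact_dyadic m x.
Proof.
move=> dx; have [m dm m_min] := ex_minnP (ex_intro (fun m => dyadic m x) n dx).
exists m; first exact: m_min.
rewrite /exact_dyadic dm; case: m dm m_min => // m _ m_min /=.
by apply/negP => /m_min; rewrite ltnn.
Qed.

(* For [x] of exact dyadic order [n], [x - 2^-n] and [x + 2^-n] are the two
   nearest dyadics born before [x]; the left one is missing when [x] is an
   integer [<= 0] and the right one when [x] is an integer [>= 0].  The number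
   [x] is the simplest one strictly between [L] and [U] iff both of its
   existing parents lie outside that interval. *)
Definition lparent_le n x L :=
  ((0 < n)%N || (0 < x)) ==> has (fun l => x - 2 ^- n <= l) L.

Definition rparent_ge n x U :=
  ((0 < n)%N || (x < 0)) ==> has (fun u => u <= x + 2 ^- n) U.

Definition simplest n x L U :=
  [&& exact_dyadic n x, all (fun l => l < x) L, all (fun u => x < u) U,
      lparent_le n x L & rparent_ge n x U].

Definition separated L U := all (fun l => all (fun u => l < u) U) L.

Lemma rparent_geE n x U : rparent_ge n x U = lparent_le n (- x) (map -%R U).
Proof.
rewrite /rparent_ge /lparent_le oppr_gt0 has_map; congr (_ ==> _).
by apply: eq_has => u /=; apply/idP/idP => h; lra.
Qed.

Lemma simplest_separated n x L U : simplest n x L U -> separated L U.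
Proof.
case/and5P => _ xL xU _ _; apply: sub_all xL => l /= lx.
by apply: sub_all xU => u /=; apply: lt_trans lx.
Qed.

Lemma simplest_opp n x L U :
  simplest n x L U -> simplest n (- x) (map -%R U) (map -%R L).
Proof.
case/and5P => ex xL xU lx rx; apply/and5P; split.
- by rewrite /exact_dyadic !dyadicN.
- by rewrite all_map; apply: sub_all xU => u /=; rewrite ltrN2.
- by rewrite all_map; apply: sub_all xL => l /=; rewrite ltrN2.
- by rewrite -rparent_geE.
- by rewrite rparent_geE opprK mapK //; exact: opprK.
Qed.

Lemma le_lparent m n x y : dyadic m x -> dyadic n y -> x < y ->
  (((0 < m)%N || (x < 0)) -> y < x + 2 ^- m) ->
  ((0 < n)%N || (0 < y)) && (x <= y - 2 ^- n).
Proof.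
move=> dx dy xy yx.
suff [pos dxn] : ((0 < n)%N || (0 < y)) /\ dyadic n x.
  by rewrite pos /=; have := dyadic_gap dxn dy xy; lra.
case: (boolP ((0 < m)%N || (x < 0))) => [/yx ylt|].
  case: (leqP n m) => nm.
    by have := dyadic_gap dx (dyadicW nm dy) xy; lra.
  by rewrite (leq_ltn_trans _ nm) //; split; last exact: dyadicW (ltnW nm) dx.
rewrite negb_or -leqNgt leqn0 -leNgt => /andP [/eqP m0 x_ge0].
split; first by apply/orP; right; lra.
by apply: dyadicW dx; rewrite m0.
Qed.

Lemma simplest_le m n x y L1 U1 L2 U2 :
  simplest m x L1 U1 -> simplest n y L2 U2 ->
  all (fun u => y < u) U1 -> all (fun l => l < x) L2 -> y <= x.
Proof.
case/and5P => /andP [dx _] _ _ _ rx /and5P [/andP [dy _] _ _ ly _] yU1 L2x.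
rewrite leNgt; apply/negP => xy.
have /andP [pos xle] : ((0 < n)%N || (0 < y)) && (x <= y - 2 ^- n).
  apply: le_lparent dx dy xy _ => rpos.
  have /hasP [u uU1 ule] := implyP rx rpos.
  by apply: lt_le_trans ule; exact: (allP yU1).
have /hasP [l lL2 lle] := implyP ly pos.
by move: (allP L2x l lL2) => /= lx; lra.
Qed.

Lemma simplest_uniq m n x y L U : simplest m x L U -> simplest n y L U -> x = y.
Proof.
move=> sx sy; have /and5P [_ xL xU _ _] := sx; have /and5P [_ yL yU _ _] := sy.
by apply/eqP; rewrite eq_le (simplest_le sx sy) // (simplest_le sy sx).
Qed.

Lemma simplest_leE m n x y L1 U1 L2 U2 :
  simplest m x L1 U1 -> simplest n y L2 U2 ->
  (~~ has (fun u => u <= x) U2 && ~~ has (fun l => y <= l) L1) = (x <= y).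
Proof.
move=> sx sy; have /and5P [_ xL _ _ _] := sx; have /and5P [_ _ yU _ _] := sy.
apply/idP/idP => [/andP [/hasPn U2x /hasPn L1y]|xy].
  apply: (simplest_le sy sx); first by apply/allP => u /U2x; rewrite -ltNge.
  by apply/allP => l /L1y; rewrite -ltNge.
apply/andP; split; apply/hasPn.
  by move=> u /(allP yU) /= yu; rewrite -ltNge; exact: le_lt_trans yu.
by move=> l /(allP xL) /= lx; rewrite -ltNge; exact: lt_le_trans xy.
Qed.

Lemma lparent_le_add e m n x y L1 L2 : (e <= maxn m n)%N ->
  lparent_le m x L1 -> lparent_le n y L2 ->
  lparent_le e (x + y) ([seq l + y | l <- L1] ++ [seq x + l | l <- L2]).
Proof.
rewrite /lparent_le has_cat !has_map => e_max lx ly; apply/implyP => pos.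
have [m_le_n|n_lt_m] := leqP m n; last first.
  have e_m : (e <= m)%N by rewrite (maxn_idPl (ltnW n_lt_m)) in e_max.
  have m_gt0 : (0 < m)%N := leq_ltn_trans (leq0n n) n_lt_m.
  move: lx; rewrite m_gt0 => /hasP [l lL1 hl].
  by apply/orP; left; apply/hasP; exists l => //=; have := ler_pow2V e_m; lra.
have e_n : (e <= n)%N by rewrite (maxn_idPr m_le_n) in e_max.
case: (posnP n) => [n0|n_gt0]; last first.
  move: ly; rewrite n_gt0 => /hasP [l lL2 hl].
  by apply/orP; right; apply/hasP; exists l => //=; have := ler_pow2V e_n; lra.
have m0 : m = 0%N by apply/eqP; rewrite -leqn0 -n0.
have e0 : e = 0%N by apply/eqP; rewrite -leqn0 -n0.
rewrite {}e0 {}m0 {}n0 /= in pos lx ly *.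
have [x_gt0|x_le0] := ltrP 0 x.
  have /hasP [l lL1 hl] := implyP lx x_gt0.
  by apply/orP; left; apply/hasP; exists l => //=; lra.
have y_gt0 : 0 < y by lra.
have /hasP [l lL2 hl] := implyP ly y_gt0.
by apply/orP; right; apply/hasP; exists l => //=; lra.
Qed.

Lemma simplest_add m n x y L1 U1 L2 U2 :
  simplest m x L1 U1 -> simplest n y L2 U2 ->
  exists e, simplest e (x + y)
    ([seq l + y | l <- L1] ++ [seq x + l | l <- L2])
    ([seq u + y | u <- U1] ++ [seq x + u | u <- U2]).
Proof.
case/and5P => /andP [dx _] xL1 xU1 lx rx /and5P [/andP [dy _] yL2 yU2 ly ry].
have dxy : dyadic (maxn m n) (x + y).
  by apply: dyadicD; [apply: dyadicW dx; apply: leq_maxl | apply: dyadicW dy; apply: leq_maxr].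
have [e e_max exy] := exact_dyadic_exists dxy.
exists e; apply/and5P; split => //.
- rewrite all_cat !all_map; apply/andP; split.
    by apply: sub_all xL1 => l /=; lra.
  by apply: sub_all yL2 => l /=; lra.
- rewrite all_cat !all_map; apply/andP; split.
    by apply: sub_all xU1 => u /=; lra.
  by apply: sub_all yU2 => u /=; lra.
- exact: lparent_le_add e_max lx ly.
rewrite !rparent_geE in rx ry *; rewrite opprD map_cat -!map_comp.
have := lparent_le_add e_max rx ry; rewrite -!map_comp.
by congr (is_true (lparent_le _ _ (_ ++ _))); apply: eq_map => u /=; rewrite opprD.
Qed.

Definition next_dyadic n l : R := (Num.floor (l * 2 ^+ n) + 1)%:~R / 2 ^+ n.

Lemma next_dyadicE n l : next_dyadic n l * 2 ^+ n = (Num.floor (l * 2 ^+ n) + 1)%:~R.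
Proof. by rewrite mulfVK // expf_neq0 // pnatr_eq0. Qed.

Lemma dyadic_next n l : dyadic n (next_dyadic n l).
Proof. by rewrite /dyadic next_dyadicE intr_int. Qed.

Lemma next_dyadic_gt n l : l < next_dyadic n l.
Proof. by rewrite -(ltr_pM2r (exprn_gt0 n (ltr0n _ 2))) next_dyadicE floorD1_gt. Qed.

Lemma next_dyadic_le n l : next_dyadic n l <= l + 2 ^- n.
Proof.
have p_gt0 : 0 < 2 ^+ n :> R by rewrite exprn_gt0.
rewrite -(ler_pM2r p_gt0) next_dyadicE mulrDl mulVf ?gt_eqF // intrD.
by have := floor_le (l * 2 ^+ n); lra.
Qed.

Lemma next_dyadic_min n l y : dyadic n y -> l < y -> next_dyadic n l <= y.
Proof.
move=> /intrP [z hz] ly; have p_gt0 : 0 < 2 ^+ n :> R by rewrite exprn_gt0.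
rewrite -(ler_pM2r p_gt0) next_dyadicE hz ler_int lezD1 floor_lt_int -hz.
by rewrite ltr_pM2r.
Qed.

Lemma next_dyadicS n l : next_dyadic n l <= next_dyadic n.+1 l + 2 ^- n.+1.
Proof.
have p_gt0 : 0 < 2 ^+ n.+1 :> R by rewrite exprn_gt0.
rewrite -(ler_pM2r p_gt0) mulrDl mulVf ?gt_eqF // next_dyadicE.
rewrite exprS mulrCA next_dyadicE mulrCA.
have : 2 * Num.floor (l * 2 ^+ n) <= Num.floor (2 * (l * 2 ^+ n)).
  by rewrite floor_ge_int intrM; have := floor_le (l * 2 ^+ n); lra.
rewrite -(ler_int R) !intrD !intrM; lra.
Qed.

Lemma exists_pow2V_lt d : 0 < d -> exists n, 2 ^- n < d :> R.
Proof.
move=> d_gt0; exists (Num.bound d^-1).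
rewrite -ltf_pV2 ?posrE ?invr_gt0 ?exprn_gt0 // invrK.
exact: upper_nthrootP.
Qed.

Lemma exists_pow2V_sep l U :
  all (fun u => l < u) U -> exists n, all (fun u => l + 2 ^- n < u) U.
Proof.
elim: U => [|u U IH] /=; first by exists 0%N.
case/andP => lu /IH [n1 h1]; have [n2 h2] := @exists_pow2V_lt (u - l) ltac:(lra).
exists (maxn n1 n2); apply/andP; split; first by have := ler_pow2V (leq_maxr n1 n2); lra.
by apply: sub_all h1 => v /=; have := ler_pow2V (leq_maxl n1 n2); lra.
Qed.

Lemma simplest_exists_ge0 L U :
  separated L U -> has (fun l => 0 <= l) L -> exists n x, simplest n x L U.
Proof.
move=> LU /hasP [l0 l0L l0_ge0]; have [l lL lmax] := exists_max_seq l0L.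
have l_ge0 : 0 <= l by move: (allP lmax l0 l0L) => /=; lra.
have lU := allP LU l lL.
pose fits n := all (fun u => next_dyadic n l < u) U.
have fits_ex : exists n, fits n.
  have [n hn] := exists_pow2V_sep lU; exists n; apply: sub_all hn => u /=.
  by have := next_dyadic_le n l; lra.
case: (ex_minnP fits_ex) => n fits_n n_min; have lx := next_dyadic_gt n l.
exists n, (next_dyadic n l); apply/and5P; split => //.
- rewrite /exact_dyadic dyadic_next /=; case: n fits_n n_min lx => //= n fits_n n_min _.
  apply/negP => /next_dyadic_min /(_ (next_dyadic_gt n.+1 l)) le_next.
  have : fits n by apply: sub_all fits_n => u /=; apply: le_lt_trans le_next.
  by move/n_min; rewrite ltnn.
- by apply: sub_all lmax => l' /= l'l; apply: le_lt_trans l'l lx.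
- apply/implyP => _; apply/hasP; exists l => //.
  by have := next_dyadic_le n l; lra.
case: n fits_n n_min lx => [|n] fits_n n_min lx.
  by rewrite /rparent_ge /= ltNge (ltW (le_lt_trans l_ge0 lx)).
have : ~~ fits n by apply/negP => /n_min; rewrite ltnn.
rewrite -has_predC => /hasP [u uU /=]; rewrite -leNgt => ule.
apply/implyP => _; apply/hasP; exists u => //.
by have := next_dyadicS n l; lra.
Qed.

Lemma simplest_exists L U : separated L U -> exists n x, simplest n x L U.
Proof.
move=> LU; case: (boolP (has (fun l => 0 <= l) L)) => [|/hasPn L_lt0].
  exact: simplest_exists_ge0.
case: (boolP (has (fun u => u <= 0) U)) => [U_le0|/hasPn U_gt0].
  have sepN : separated (map -%R U) (map -%R L).
    rewrite /separated all_map; apply/allP => u uU /=; rewrite all_map.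
    by apply/allP => l lL /=; rewrite ltrN2; exact: allP (allP LU l lL) u uU.
  have hasN : has (fun l => 0 <= l) (map -%R U).
    by rewrite has_map; apply: sub_has U_le0 => u /=; rewrite oppr_ge0.
  have [n [x sx]] := simplest_exists_ge0 sepN hasN.
  exists n, (- x); have := simplest_opp sx; rewrite !mapK //; exact: opprK.
exists 0%N, 0; apply/and5P; split.
- by rewrite /exact_dyadic dyadic0.
- by apply/allP => l /L_lt0; rewrite -ltNge.
- by apply/allP => u /U_gt0; rewrite -ltNge.
- by rewrite /lparent_le ltxx.
- by rewrite /rparent_ge ltxx.
Qed.

Lemma simplest_gap n x L B :
  simplest n x L [:: B] -> B - x <= 1 -> B - x <= 2 ^- n.
Proof.
case/and5P => _ _ _ _ rx Bx; case: (posnP n) => [->|n_gt0].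
  by rewrite expr0 invr1.
by move: rx; rewrite /rparent_ge n_gt0 /= orbF; lra.
Qed.

Lemma simplest_succ A B y n e :
  A < y -> y < B -> dyadic n y -> B - y <= 2 ^- n ->
  (0 < e)%N -> 2 ^- e < B - y ->
  (forall m, (0 < m)%N -> 2 ^- m < B - y -> (e <= m)%N) ->
  simplest e (y + 2 ^- e) [:: A; y] [:: B].
Proof.
move=> Ay yB dy yBn e_gt0 e_lt e_min.
have n_lt_e : (n < e)%N by rewrite -ltr_pow2V; lra.
case: e e_gt0 e_lt e_min n_lt_e => // e _ e_lt e_min n_le_e.
have yBe : B - y <= 2 ^- e.
  case: (posnP e) => [e0|e_gt0].
    by move: n_le_e yBn; rewrite e0 ltnS leqn0 => /eqP ->.
  by rewrite leNgt; apply/negP => /(e_min _ e_gt0); rewrite ltnn.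
have w_gt0 := pow2V_gt0 e.+1; have wS := pow2VS e.
apply/and5P; split.
- have dye : dyadic e y := dyadicW (n_le_e : (n <= e)%N) dy.
  have dyS : dyadic e.+1 (y + 2 ^- e.+1).
    by apply: dyadicD; [exact: dyadicW (leqnSn e) dye | exact: dyadic_pow2V].
  rewrite /exact_dyadic dyS /=; apply/negP => dyeS.
  have : dyadic e (y + 2 ^- e.+1 + - y) by apply: dyadicD; rewrite ?dyadicN.
  by rewrite addrC addKr; apply/negP; exact: dyadic_pow2VS.
- by rewrite /= ?andbT; apply/andP; split; lra.
- by rewrite /= ?andbT; lra.
- by rewrite /lparent_le /= addrK lexx orbT.
- by rewrite /rparent_ge /= orbF; lra.
Qed.

End DyadicSimplicity.

(** * Induction on games *)

Lemma all_In T (p : pred T) s x : all p s -> List.In x s -> p x.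
Proof. by elim: s => //= y s IH /andP [py ps] [<-|/IH]; auto. Qed.

Lemma In_all T (p : pred T) s : (forall x, List.In x s -> p x) -> all p s.
Proof. by elim: s => //= y s IH h; rewrite h /= ?IH //; auto. Qed.

Lemma In_has T (p : pred T) s x : List.In x s -> p x -> has p s.
Proof. by elim: s => //= y s IH [<- ->|/IH h /h ->]; rewrite ?orbT. Qed.

Lemma eq_all_In T (p q : pred T) s :
  (forall x, List.In x s -> p x = q x) -> all p s = all q s.
Proof. by elim: s => //= y s IH h; rewrite h ?IH //; auto. Qed.

Lemma eq_has_In T (p q : pred T) s :
  (forall x, List.In x s -> p x = q x) -> has p s = has q s.
Proof. by elim: s => //= y s IH h; rewrite h ?IH //; auto. Qed.

Lemma eq_map_In T U (f g : T -> U) s :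
  (forall x, List.In x s -> f x = g x) -> map f s = map g s.
Proof. by elim: s => //= y s IH h; rewrite h ?IH //; auto. Qed.

Lemma gsize_gt0 g : (0 < gsize g)%N.
Proof. by case: g. Qed.

Lemma gsize_In x s : List.In x s -> (gsize x <= sumn (map gsize s))%N.
Proof.
elim: s => //= y s IH [<-|/IH]; first exact: leq_addr.
by move/leq_trans; apply; apply: leq_addl.
Qed.

Lemma gsize_leftopt x l r : List.In x l -> (gsize x < gsize (Game l r))%N.
Proof. by move/gsize_In => /= h; lia. Qed.

Lemma gsize_rightopt x l r : List.In x r -> (gsize x < gsize (Game l r))%N.
Proof. by move/gsize_In => /= h; lia. Qed.

Lemma game_ind2 (P : game -> game -> Prop) :
  (forall g h, (forall g' h', (gsize g' + gsize h' < gsize g + gsize h)%N -> P g' h') ->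
     P g h) ->
  forall g h, P g h.
Proof.
move=> IH g h; move: {2}(gsize g + gsize h)%N (leqnn (gsize g + gsize h)) => n.
elim: n g h => [|n IHn] g h gh_le; first by move: gh_le; have := gsize_gt0 g; lia.
by apply: IH => g' h' lt; apply: IHn; lia.
Qed.

Lemma game_ind_opts (P : game -> Prop) :
  (forall l r, (forall x, List.In x l -> P x) -> (forall x, List.In x r -> P x) ->
     P (Game l r)) ->
  forall g, P g.
Proof.
move=> IH g; apply: (@game_ind2 (fun g _ => P g) _ g zero) => -[l r] h IHs.
apply: IH => x x_in; apply: (IHs x h); rewrite ltn_add2r.
  exact: gsize_leftopt.
exact: gsize_rightopt.
Qed.

Lemma le_fuel_enough n m g h : (gsize g + gsize h <= n)%N -> (gsize g + gsize h <= m)%N ->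
  le_fuel n g h = le_fuel m g h.
Proof.
elim: n m g h => [|n IH] [|m] g h hn hm; try by move: hn hm; have := gsize_gt0 g; lia.
case: g hn hm => gl gr; case: h => hl hr hn hm /=.
congr (~~ _ && ~~ _); apply: eq_has_In => x x_in; apply: IH.
- by have := gsize_rightopt hl x_in; lia.
- by have := gsize_rightopt hl x_in; lia.
- by have := gsize_leftopt gr x_in; lia.
- by have := gsize_leftopt gr x_in; lia.
Qed.

Lemma gleE g h : gle g h =
  ~~ has (fun hr => gle hr g) (rightopts h) && ~~ has (fun gl => gle h gl) (leftopts g).
Proof.
case: g => gl gr; case: h => hl hr; rewrite [in LHS]/gle [gsize (Game gl gr)]/= addSn /=.
congr (~~ _ && ~~ _); apply: eq_has_In => x x_in; symmetry; apply: le_fuel_enough => //=.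
- by have := gsize_rightopt hl x_in; rewrite /=; lia.
- by have := gsize_leftopt gr x_in; rewrite /=; lia.
Qed.

(** * Values of numeric games *)

Lemma exists_simplest_pair (L U : seq rat) :
  exists p : rat * nat, separated L U ==> simplest p.2 p.1 L U.
Proof.
case: (boolP (separated L U)) => [/simplest_exists [n [x sx]]|_]; first by exists (x, n).
by exists (0, 0%N).
Qed.

(* An arbitrary value when [L] and [U] are not separated. *)
Definition simplest_between (L U : seq rat) : rat :=
  (xchoose (exists_simplest_pair L U)).1.

Lemma simplest_betweenP L U :
  separated L U -> exists n, simplest n (simplest_between L U) L U.
Proof.
by move=> LU; exists (xchoose (exists_simplest_pair L U)).2;
   exact: implyP (xchooseP (exists_simplest_pair L U)) LU.
Qed.

Fixpoint gval (g : game) : rat :=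
  let: Game l r := g in simplest_between (map gval l) (map gval r).

Fixpoint numeric (g : game) : bool :=
  let: Game l r := g in
  [&& all numeric l, all numeric r & separated (map gval l) (map gval r)].

Lemma numericE l r : numeric (Game l r) =
  [&& all numeric l, all numeric r & separated (map gval l) (map gval r)].
Proof. by []. Qed.

Definition valued (g : game) (x : rat) := numeric g /\ gval g = x.

Lemma numeric_simplest l r :
  numeric (Game l r) -> exists n, simplest n (gval (Game l r)) (map gval l) (map gval r).
Proof. by case/and3P => _ _ /simplest_betweenP. Qed.

Lemma valued_simplest l r n x : all numeric l -> all numeric r ->
  simplest n x (map gval l) (map gval r) -> valued (Game l r) x.
Proof.
move=> nl nr sx; have sep := simplest_separated sx.
split; first by rewrite /= nl nr sep.
by have [m sv] := simplest_betweenP sep; exact: simplest_uniq sv sx.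
Qed.

Lemma valued_map (f : game -> game) (F : game -> rat) s :
  (forall x, List.In x s -> valued (f x) (F x)) ->
  all numeric (map f s) /\ map gval (map f s) = map F s.
Proof.
move=> fF; split; last by rewrite -map_comp; apply: eq_map_In => x /fF [].
by rewrite all_map; apply: In_all => x /fF [].
Qed.

Lemma gle_gval g h : numeric g -> numeric h -> gle g h = (gval g <= gval h).
Proof.
move: g h; apply: game_ind2 => -[gl gr] [hl hr] IH ng nh.
have [m sg] := numeric_simplest ng; have [n sh] := numeric_simplest nh.
move: (ng) (nh); rewrite !numericE => /and3P [ngl _ _] /and3P [_ nhr _].
rewrite gleE -(simplest_leE sg sh) !has_map.
congr (~~ _ && ~~ _); apply: eq_has_In => x x_in /=; apply: IH => //.
- by rewrite addnC ltn_add2l; exact: gsize_rightopt x_in.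
- exact: all_In nhr x_in.
- by rewrite addnC ltn_add2r; exact: gsize_leftopt x_in.
- exact: all_In ngl x_in.
Qed.

Lemma glt_gval g h : numeric g -> numeric h -> glt g h = (gval g < gval h).
Proof. by move=> ng nh; rewrite /glt !gle_gval // -ltNge andb_idl // => /ltW. Qed.

Lemma is_number_numeric g : is_number g = numeric g.
Proof.
elim/game_ind_opts: g => l r IHl IHr.
rewrite numericE /= (eq_all_In IHl) (eq_all_In IHr).
case nl: (all numeric l); case nr: (all numeric r) => //=.
apply/idP/idP => [/andP [_ rG]|sep].
  rewrite /separated all_map; apply: In_all => x x_in /=.
  rewrite all_map; apply: In_all => y y_in /=.
  have := all_In rG y_in; rewrite /glt gleE => /andP [/andP [_ noleft] _].
  rewrite ltNge -gle_gval ?(all_In nr y_in) ?(all_In nl x_in) //.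
  by apply: contra noleft => yx; exact: In_has x_in yx.
have nG : numeric (Game l r) by rewrite numericE nl nr.
have [n /and5P [_ lG Gr _ _]] := numeric_simplest nG.
apply/andP; split; apply: In_all => x x_in; rewrite glt_gval ?(all_In nl x_in) ?(all_In nr x_in) //.
  exact: all_In lG (List.in_map gval _ _ x_in).
exact: all_In Gr (List.in_map gval _ _ x_in).
Qed.

Lemma valued_gval g : numeric g -> valued g (gval g).
Proof. by []. Qed.

Lemma gle_valued g h x y : valued g x -> valued h y -> gle g h = (x <= y).
Proof. by move=> [ng <-] [nh <-]; exact: gle_gval. Qed.

Lemma glt_valued g h x y : valued g x -> valued h y -> glt g h = (x < y).
Proof. by move=> [ng <-] [nh <-]; exact: glt_gval. Qed.

Lemma game_eq_valued g h x y : valued g x -> valued h y -> game_eq g h = (x == y).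
Proof. by move=> vg vh; rewrite /game_eq (gle_valued vg vh) (gle_valued vh vg) -eq_le. Qed.

Lemma numeric_add g h : numeric g -> numeric h -> valued (add g h) (gval g + gval h).
Proof.
move: g h; apply: game_ind2 => -[gl gr] [hl hr] IH ng nh.
set g := Game gl gr; set h := Game hl hr.
have [m sg] := numeric_simplest ng; have [n sh] := numeric_simplest nh.
move: (ng) (nh); rewrite !numericE => /and3P [ngl ngr _] /and3P [nhl nhr _].
have IHg x : List.In x gl \/ List.In x gr -> valued (add x h) (gval x + gval h).
  move=> x_opt; apply: IH => //.
    by rewrite ltn_add2r; case: x_opt => [/gsize_leftopt|/gsize_rightopt]; apply.
  by case: x_opt => x_in; [exact: all_In ngl x_in | exact: all_In ngr x_in].
have IHh x : List.In x hl \/ List.In x hr -> valued (add g x) (gval g + gval x).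
  move=> x_opt; apply: IH => //.
    by rewrite ltn_add2l; case: x_opt => [/gsize_leftopt|/gsize_rightopt]; apply.
  by case: x_opt => x_in; [exact: all_In nhl x_in | exact: all_In nhr x_in].
have [ngl' egl] := valued_map (f := add^~ h) (fun x x_in => IHg x (or_introl x_in)).
have [ngr' egr] := valued_map (f := add^~ h) (fun x x_in => IHg x (or_intror x_in)).
have [nhl' ehl] := valued_map (f := add g) (fun x x_in => IHh x (or_introl x_in)).
have [nhr' ehr] := valued_map (f := add g) (fun x x_in => IHh x (or_intror x_in)).
have [e se] := simplest_add sg sh.
apply: (@valued_simplest _ _ e); rewrite ?all_cat ?ngl' ?ngr' ?nhl' ?nhr' //.
by rewrite !map_cat egl egr ehl ehr -!map_comp in se *.
Qed.

Lemma valued_add g h x y : valued g x -> valued h y -> valued (add g h) (x + y).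
Proof. by move=> [ng <-] [nh <-]; exact: numeric_add. Qed.

Lemma valued_neg g x : valued g x -> valued (neg g) (- x).
Proof.
move=> [ng <-] {x}; elim/game_ind_opts: g ng => l r IHl IHr ng.
have [n sg] := numeric_simplest ng.
move: ng; rewrite numericE => /and3P [nl nr _].
have [nr' er] := valued_map (f := neg) (F := fun x => - gval x)
  (fun x x_in => IHr x x_in (all_In nr x_in)).
have [nl' el] := valued_map (f := neg) (F := fun x => - gval x)
  (fun x x_in => IHl x x_in (all_In nl x_in)).
apply: (@valued_simplest _ _ n) => //.
by rewrite er el !(map_comp -%R gval); exact: simplest_opp.
Qed.

Lemma valued_sub g h x y : valued g x -> valued h y -> valued (add g (neg h)) (x - y).
Proof. by move=> vg /valued_neg; exact: valued_add. Qed.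

Lemma valued_zero : valued zero 0.
Proof. by apply: (@valued_simplest _ _ 0%N); rewrite //= /exact_dyadic dyadic0. Qed.

Lemma valued_posint n : valued (posint n) n%:R.
Proof.
elim: n => [|n [nn en]]; first exact: valued_zero.
apply: (@valued_simplest _ _ 0%N); rewrite /= ?nn // en.
apply/and5P; split => //=.
- by rewrite /exact_dyadic /dyadic expr0 mulr1 natr_int.
- by rewrite andbT ltr_nat.
- by rewrite /lparent_le /= ltr0Sn expr0 invr1 -natr1 addrK lexx.
- by rewrite /rparent_ge /= ltNge ler0n.
Qed.

Lemma valued_pinv2 n : valued (pinv2 n) (2 ^- n).
Proof.
elim: n => [|n [nn en]]; first by rewrite expr0 invr1; exact: valued_posint 1.
have [_ ez] := valued_zero.
apply: (@valued_simplest [:: zero] [:: pinv2 n] n.+1); [by [] | by rewrite /= nn |].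
change (simplest n.+1 (2 ^- n.+1) [:: gval zero] [:: gval (pinv2 n)]); rewrite ez en.
apply/and5P; split => /=.
- by rewrite /exact_dyadic dyadic_pow2V dyadic_pow2VS.
- by rewrite andbT pow2V_gt0.
- by rewrite andbT ltr_pow2V.
- by rewrite /lparent_le /= subrr lexx.
- by rewrite /rparent_ge /= orbF pow2VS; lra.
Qed.

Lemma valued_gsum (I : Type) (F : I -> game) (f : I -> rat) s :
  (forall i, valued (F i) (f i)) -> valued (gsum (map F s)) (\sum_(i <- s) f i).
Proof.
move=> Ff; elim: s => [|i s IH]; first by rewrite big_nil; exact: valued_zero.
by rewrite big_cons; exact: valued_add (Ff i) IH.
Qed.

(** * Ordinal sums with integers *)

Lemma negK : involutive neg.
Proof.
elim/game_ind_opts => l r IHl IHr /=.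
by rewrite -!map_comp (eq_map_In IHl) (eq_map_In IHr) !map_id.
Qed.

Lemma neg_osum g h : neg (osum g h) = osum (neg g) (neg h).
Proof.
case: g => gl gr; elim/game_ind_opts: h => l r IHl IHr /=.
by rewrite !map_cat -!map_comp (eq_map_In IHl) (eq_map_In IHr).
Qed.

Lemma neg_negint k : neg (negint k) = posint k.
Proof. by elim: k => //= k ->. Qed.

Lemma osum_posint a b G k : G = Game [:: a] [:: b] ->
  osum G (posint k) = Game (a :: map (osum G) (leftopts (posint k))) [:: b].
Proof. by move=> ->; case: k. Qed.

Definition sum_pow2V (f : nat -> nat) j : rat := \sum_(i <- iota 1 j) 2 ^- f i.

Lemma sum_pow2VS f j : sum_pow2V f j.+1 = sum_pow2V f j + 2 ^- f j.+1.
Proof.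
have iotaS : iota 1 j.+1 = iota 1 j ++ [:: j.+1] by rewrite -[j.+1]addn1 iotaD add1n addn1.
by rewrite /sum_pow2V iotaS big_cat big_seq1.
Qed.

Lemma sum_pow2V_ge0 f j : 0 <= sum_pow2V f j.
Proof. by apply: sumr_ge0 => i _; exact: ltW (pow2V_gt0 _ _). Qed.

Lemma valued_partial_pinv f i : valued (partial_pinv f i) (sum_pow2V f i.-1).
Proof. exact: valued_gsum (fun j => valued_pinv2 (f j)). Qed.

Lemma valued_osum_posint (a b G : game) (alpha : nat -> nat) k :
  G = Game [:: a] [:: b] -> numeric G -> gval b - gval G <= 1 ->
  (forall i, (0 < i <= k)%N ->
     [/\ (0 < alpha i)%N, 2 ^- alpha i < gval b - gval G - sum_pow2V alpha i.-1
       & forall m, (0 < m)%N ->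
           2 ^- m < gval b - gval G - sum_pow2V alpha i.-1 -> (alpha i <= m)%N]) ->
  valued (osum G (posint k)) (gval G + sum_pow2V alpha k).
Proof.
move=> eG nG Gb_le1; move: (nG); rewrite {1}eG numericE => /and3P [/andP [na _] /andP [nb _] _].
elim: k => [|k IH] hyp.
  by rewrite /sum_pow2V big_nil addr0 (@osum_posint a b G 0 eG) /= -eG.
have [nk ek] : valued (osum G (posint k)) (gval G + sum_pow2V alpha k).
  by apply: IH => i /andP [i_gt0 ik]; apply: hyp; rewrite i_gt0 leqW.
set y := gval G + sum_pow2V alpha k in ek *.
move: (nk); rewrite (@osum_posint a b G k eG) => /numeric_simplest [n].
rewrite -(@osum_posint a b G k eG) ek => sy.
have /and5P [/andP [dy _] /andP [Ay _] /andP [yB _] _ _] := sy.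
have y_ge : gval G <= y by rewrite /y lerDl sum_pow2V_ge0.
have gap : gval b - y <= 2 ^- n by apply: simplest_gap sy _; lra.
have [a_gt0 a_lt a_min] := hyp k.+1 (leqnn k.+1).
have By : gval b - gval G - sum_pow2V alpha k = gval b - y by rewrite /y opprD addrA.
rewrite /= By in a_lt a_min.
have := simplest_succ Ay yB dy gap a_gt0 a_lt a_min.
rewrite sum_pow2VS addrA -/y (@osum_posint a b G k.+1 eG) => sy'.
by apply: (@valued_simplest [:: a; osum G (posint k)] [:: b] (alpha k.+1));
  rewrite /= ?na ?nk ?nb ?ek.
Qed.

Lemma valued_osum_negint (a b G : game) (beta : nat -> nat) k :
  G = Game [:: a] [:: b] -> numeric G -> gval G - gval a <= 1 ->
  (forall i, (0 < i <= k)%N ->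
     2 ^- beta i < gval G - gval a - sum_pow2V beta i.-1 /\
     forall m, 2 ^- m < gval G - gval a - sum_pow2V beta i.-1 -> (beta i <= m)%N) ->
  valued (osum G (negint k)) (gval G - sum_pow2V beta k).
Proof.
move=> eG nG aG_le1 hyp; move: (nG); rewrite {1}eG numericE => /and3P [/andP [na _] _ _].
have [nnG enG] := valued_neg (valued_gval nG); have [_ ena] := valued_neg (valued_gval na).
rewrite -[osum G _]negK neg_osum neg_negint.
have -> : gval G - sum_pow2V beta k = - (gval (neg G) + sum_pow2V beta k).
  by rewrite enG opprD opprK.
apply/valued_neg/(@valued_osum_posint (neg b) (neg a)) => //; first by rewrite eG.
  by rewrite ena enG; lra.
move=> i /hyp [b_lt b_min]; rewrite ena enG.
have -> : - gval a - - gval G = gval G - gval a by lra.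
(* [beta i > 0] is forced by [2^-(beta i) < G - a <= 1]. *)
split=> [|//|m _ /b_min //]; rewrite lt0n; apply/eqP => b0; move: b_lt.
by rewrite b0 expr0 invr1; have := sum_pow2V_ge0 beta i.-1; lra.
Qed.

Lemma glt_pinv2_sub (c d : game) (f : nat -> nat) i m : numeric c -> numeric d ->
  glt (pinv2 m) (add (add c (neg d)) (neg (partial_pinv f i))) =
  (2 ^- m < gval c - gval d - sum_pow2V f i.-1).
Proof.
move=> nc nd; apply: glt_valued (valued_pinv2 m) _.
exact: valued_sub (valued_sub (valued_gval nc) (valued_gval nd)) (valued_partial_pinv f i).
Qed.

Close Scope ring_scope.

Theorem theorem4p2 (k : nat) (a b G : game) :
  0 < k ->
  is_number a -> is_number b -> is_number G ->
  G = Game [:: a] [:: b] ->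
  (forall alpha : nat -> nat,
     gle (add b (neg G)) (posint 1) ->
     (forall i, 1 <= i <= k ->
        [/\ 0 < alpha i,
            glt (pinv2 (alpha i)) (add (add b (neg G)) (neg (partial_pinv alpha i)))
          & forall m, 0 < m ->
              glt (pinv2 m) (add (add b (neg G)) (neg (partial_pinv alpha i))) ->
              alpha i <= m]) ->
     game_eq (osum G (posint k))
         (add G (gsum [seq pinv2 (alpha i) | i <- iota 1 k])))
  /\
  (forall beta : nat -> nat,
     gle (add G (neg a)) (posint 1) ->
     (forall i, 1 <= i <= k ->
        glt (pinv2 (beta i)) (add (add G (neg a)) (neg (partial_pinv beta i))) /\
        (forall m,
              glt (pinv2 m) (add (add G (neg a)) (neg (partial_pinv beta i))) ->
              beta i <= m)) ->
     game_eq (osum G (negint k))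
         (add G (neg (gsum [seq pinv2 (beta i) | i <- iota 1 k])))).
Proof.
(* The statement holds for k = 0 as well. *)
move=> _ na nb nG eG; rewrite !is_number_numeric in na nb nG.
have vG := valued_gval nG.
have vsum f : valued (gsum [seq pinv2 (f i) | i <- iota 1 k]) (sum_pow2V f k).
  exact: valued_gsum (fun i => valued_pinv2 (f i)).
split=> [alpha|beta] hle hyp.
- rewrite (gle_valued (valued_sub (valued_gval nb) vG) (valued_posint 1)) in hle.
  suff vk : valued (osum G (posint k)) (gval G + sum_pow2V alpha k)%R.
    by rewrite (game_eq_valued vk (valued_add vG (vsum alpha))) eqxx.
  apply: (valued_osum_posint eG nG hle) => i /hyp [a_gt0].
  rewrite !glt_pinv2_sub // => a_lt a_min; split=> // m m_gt0.
  by rewrite -glt_pinv2_sub //; exact: a_min.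
rewrite (gle_valued (valued_sub vG (valued_gval na)) (valued_posint 1)) in hle.
suff vk : valued (osum G (negint k)) (gval G - sum_pow2V beta k)%R.
  by rewrite (game_eq_valued vk (valued_add vG (valued_neg (vsum beta)))) eqxx.
apply: (valued_osum_negint eG nG hle) => i /hyp [].
by rewrite !glt_pinv2_sub // => b_lt b_min; split=> // m; rewrite -glt_pinv2_sub //; exact: b_min.
Qed.
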